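(* Let $q$ be a prime power, $n\ge1$, and $k$ an integer with $\frac{q-1}{2}<k<q-1$. Then \[\dim(\operatorname{Hull}(C_{n,k}^q))=\dim(C_{n,k}^q)-(2k+1-(q-1))=\binom{n+k}{k}-(2k+1-(q-1)).\] Moreover, $\{\operatorname{ev}(m)\}_{m\in\mathcal{M}}$ is a basis of $\operatorname{Hull}(C_{n,k}^q)$, where $\mathcal{M}$ is the set of all monomials of degree $k$ in $x_0,\dots,x_n$ except the monomials $x_{n-1}^{k-a}x_n^{a}$ with $q-1-k\le a\le k$.
   Context: For a prime power $q$ and integers $n\ge 1$, $k\ge 0$, the projective Reed-Muller code $C_{n,k}^q\subseteq \mathbb{F}_q^N$, $N=\frac{q^{n+1}-1}{q-1}$, is defined as follows. For each point of $\mathbb{P}^n(\mathbb{F}_q)$ choose the affine representative $(p_0,\dots,p_n)\in\mathbb{F}_q^{n+1}\setminus\{0\}$ whose left-most nonzero coordinate equals $1$, and fix an ordering $P_1',\dots,P_N'$ of these representatives; for a polynomial $F$ write $\operatorname{ev}(F)=(F(P_1'),\dots,F(P_N'))$. Then $C_{n,k}^q=\{\operatorname{ev}(F) : F\in \mathbb{F}_q[x_0,\dots,x_n]_k\}$, where $\mathbb{F}_q[x_0,\dots,x_n]_k$ is the space of homogeneous polynomials of degree $k$ together with $0$. Duals are with respect to the standard dot product, and $\operatorname{Hull}(C)=C\cap C^\perp$. *)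

From HB Require Import structures.
From mathcomp Require Import all_boot all_order all_algebra.
From mathcomp Require Import mpoly.
Set Implicit Arguments. Unset Strict Implicit. Unset Printing Implicit Defensive.
Import Order.TTheory GRing.Theory.
Local Open Scope ring_scope.

Section ProjRM.
Variables (F : finFieldType) (n : nat).

(* x is the normalized representative of a projective point of P^n(F):
   x is nonzero and its left-most nonzero coordinate equals 1. *)
Definition is_proj_rep (x : {ffun 'I_n.+1 -> F}) : bool :=
  [exists i : 'I_n.+1, (x i == 1) && [forall j : 'I_n.+1, (j < i)%N ==> (x j == 0)]].

Definition PPoint := {x : {ffun 'I_n.+1 -> F} | is_proj_rep x}.

Definition Npts : nat := #|{: PPoint}|.

(* ev(f) = (f(P'_1), ..., f(P'_N)); the ordering of points is the one given by enum. *)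
Definition ev (p : {mpoly F[n.+1]}) : 'rV[F]_Npts :=
  \row_(j < Npts) p.@[ (val (enum_val j) : 'I_n.+1 -> F) ].

(* C (a square matrix whose row space is meant to be a code) is the projective
   Reed-Muller code C_{n,k}^q : its row space is { ev(f) : f homogeneous of degree k or 0 }. *)
Definition is_PRM_code (k : nat) (C : 'M[F]_Npts) : Prop :=
  forall v : 'rV[F]_Npts,
    (v <= C)%MS <-> exists p : {mpoly F[n.+1]}, p \is k.-homog /\ v = ev p.

Definition dual_code (C : 'M[F]_Npts) : 'M[F]_Npts := kermx C^T.

Definition hull (C : 'M[F]_Npts) : 'M[F]_Npts := (C :&: dual_code C)%MS.

Definition excluded_mon (k : nat) (m : 'X_{1..n.+1}) : bool :=
  [exists a : 'I_k.+1, ((#|F|.-1 - k)%N <= a)%N &&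
     (m == [multinom (if (i : nat) == n.-1 then (k - a)%N
                      else if (i : nat) == n then (a : nat) else 0%N) | i < n.+1])].

Definition deg_mons (k : nat) : seq 'X_{1..n.+1} :=
  map val [seq m <- enum {: 'X_{1..n.+1 < k.+1}} | mdeg (val m) == k].

Definition calM (k : nat) : seq 'X_{1..n.+1} :=
  [seq m <- deg_mons k | ~~ excluded_mon k m].

Definition calM_mx (k : nat) : 'M[F]_(size (calM k), Npts) :=
  \matrix_(i < size (calM k)) ev 'X_[nth 0%MM (calM k) i].

End ProjRM.

From HB Require Import structures.
From mathcomp Require Import all_boot all_order all_algebra.
From mathcomp Require Import mpoly.
From mathcomp Require Import fingroup cyclic finfield zify.
Set Implicit Arguments. Unset Strict Implicit. Unset Printing Implicit Defensive.
Import Order.TTheory GRing.Theory FinRing.Theory.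
Local Open Scope ring_scope.

(* Write q1 = q - 1 and y_a = x_(n-1)^(k-a) x_n^a. The dot product of
   ev(x^m) and ev(x^m') is the sum of x^(m+m') over the normalized points;
   grouping the points by the position of their first nonzero coordinate
   turns it into products of power sums sum_(t in F) t^e, which for e < 2 q1
   all vanish except sum_t t^q1 = -1. Pairing with x_0 x_1^(q1-m_1) ... x_n^(q1-m_n)
   then shows that the ev(x^m), deg m = k < q1, are linearly independent.
   In degree 2k < 2 q1 only the last two pivot positions survive, so the Gram
   matrix of the monomial basis is explicit: the monomials of M are orthogonal
   to all of C, while a codeword sum_m c_m x^m orthogonal to every y_b with
   q1 - k <= b <= k satisfies c_(y_(q1-b)) = [b = k] c_(y_k); since q1 - k < k
   this forces all coefficients of the excluded monomials y_a to vanish. *)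

Lemma prodr_nat_bool (R : comPzSemiRingType) (I : finType) (P : pred I) (b : I -> bool) :
  \prod_(i | P i) ((b i)%:R : R) = [forall i, P i ==> b i]%:R.
Proof.
have [/forallP Pb|/forallPn[i]] := boolP [forall i, P i ==> b i].
  by rewrite big1 // => i /(implyP (Pb i)) ->.
rewrite negb_imply => /andP[Pi /negbTE bi_false].
by rewrite (bigD1 i) //= bi_false mul0r.
Qed.

Lemma mnm_le_mdeg n (m : 'X_{1..n}) i : (m i <= mdeg m)%N.
Proof. by rewrite mdegE (bigD1 i) //= leq_addr. Qed.

Lemma eqmx_rowP (F : fieldType) m1 m2 n (A : 'M[F]_(m1, n)) (B : 'M[F]_(m2, n)) :
  (forall v : 'rV_n, (v <= A)%MS <-> (v <= B)%MS) -> (A == B)%MS.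
Proof. by move=> AB; apply/andP; split; apply/row_subP => i; apply/AB; apply: row_sub. Qed.

Lemma mulmx_tr_sub0 (F : fieldType) m1 m2 m3 n
    (A : 'M[F]_(m1, n)) (B : 'M[F]_(m2, n)) (C : 'M[F]_(m3, n)) :
  A *m B^T = 0 -> (C <= B)%MS -> A *m C^T = 0.
Proof. by move=> AB0 /submxP[D ->]; rewrite trmx_mul mulmxA AB0 mul0mx. Qed.

Lemma sum_msupp_coef (R : nzRingType) n (p : {mpoly R[n]}) w :
  \sum_(m <- msupp p) p@_m * (m == w)%:R = p@_w.
Proof.
rewrite [in RHS](mpolyE p) raddf_sum; apply: eq_bigr => m _.
by rewrite /= mcoeffZ mcoeffX.
Qed.

Section PowerSums.
Variable F : finFieldType.
Local Notation q := #|F|.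

Definition powsum (e : nat) : F := \sum_(t : F) t ^+ e.

Lemma natr_card_finField : (q%:R : F) = 0.
Proof. by apply/eqP; rewrite -zmodXgE -order_dvdn -cardsT order_dvdG ?inE. Qed.

Lemma expf_card_pred (x : F) : x != 0 -> x ^+ q.-1 = 1.
Proof.
move=> x_neq0; apply: (mulIf x_neq0).
by rewrite mul1r -exprSr prednK ?expf_card // (ltn_trans _ (finNzRing_gt1 F)).
Qed.

Lemma q_pred_gt0 : (0 < q.-1)%N.
Proof. by rewrite -subn1 subn_gt0 finNzRing_gt1. Qed.

Lemma natr_card_pred : (q.-1%:R : F) = -1.
Proof.
apply/eqP; rewrite -subr_eq0 opprK -mulrSr prednK ?natr_card_finField //.
exact: ltnW (finNzRing_gt1 F).
Qed.

Lemma powsum0 : powsum 0 = 0.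
Proof.
by rewrite /powsum (eq_bigr (fun=> 1)) // sumr_const; apply: natr_card_finField.
Qed.

Lemma powsum_pred : powsum q.-1 = -1.
Proof.
rewrite /powsum (bigD1 0) //= expr0n gtn_eqF ?q_pred_gt0 // add0r.
rewrite (eq_bigr (fun=> 1)) => [|t /expf_card_pred //].
rewrite sumr_const.
have -> : #|[pred t : F | t != 0]| = q.-1 by rewrite -(cardC1 0).
exact: natr_card_pred.
Qed.

Lemma powsum_eq0 e : (0 < e < q.-1)%N -> powsum e = 0.
Proof.
case/andP=> e_gt0 e_lt.
have [c c_neq0 ce_neq1] : exists2 c : F, c != 0 & c ^+ e != 1.
  have XnB1_neq0 : 'X^e - 1 != 0 :> {poly F} by rewrite -size_poly_eq0 size_XnsubC.
  have /allPn[c] : ~~ all (root ('X^e - 1)) (enum [pred t : F | t != 0]).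
    apply/negP=> /(max_poly_roots XnB1_neq0)/(_ (enum_uniq _)).
    by rewrite size_XnsubC // -cardE cardC1 ltnS leqNgt e_lt.
  by rewrite mem_enum /root !hornerE subr_eq0; exists c.
have powsum_scale : powsum e = c ^+ e * powsum e.
  rewrite /powsum mulr_sumr (reindex_inj (mulfI c_neq0)) /=.
  by apply: eq_bigr => t _; rewrite exprMn.
have /eqP : (c ^+ e - 1) * powsum e = 0 by rewrite mulrBl mul1r -powsum_scale subrr.
by rewrite mulf_eq0 subr_eq0 (negbTE ce_neq1) => /eqP.
Qed.

Lemma powsum_small e : (e < (q.-1).*2)%N -> powsum e = - (e == q.-1)%:R.
Proof.
move=> e_lt; case: (ltngtP e q.-1) => [lt_e_q1|lt_q1_e|->]; last first.
- by rewrite powsum_pred.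
- have -> : powsum e = powsum (e - q.-1).
    apply: eq_bigr => t _; have [->|t_neq0] := eqVneq t 0.
      by rewrite !expr0n !gtn_eqF ?subn_gt0 // (leq_ltn_trans _ lt_q1_e).
    by rewrite -{1}(subnKC (ltnW lt_q1_e)) exprD expf_card_pred // mul1r.
  by rewrite powsum_eq0 ?oppr0 // subn_gt0 lt_q1_e; lia.
- have [->|e_gt0] := posnP e; first by rewrite powsum0 oppr0.
  by rewrite powsum_eq0 ?e_gt0 ?oppr0.
Qed.
End PowerSums.

Section DegreeMonomials.
Variables (n k : nat).
Local Notation mons := (deg_mons n k).

Lemma mem_deg_mons m : (m \in mons) = (mdeg m == k).
Proof.
apply/mapP/idP => [[m' + ->]|deg_m]; first by rewrite mem_filter => /andP[].
have deg_m_lt : (mdeg m < k.+1)%N by rewrite (eqP deg_m).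
by exists (BMultinom deg_m_lt); rewrite // mem_filter mem_enum deg_m.
Qed.

Lemma deg_mons_uniq : uniq mons.
Proof. by rewrite (map_inj_uniq val_inj) filter_uniq ?enum_uniq. Qed.

Lemma size_deg_mons : size mons = 'C(n + k, k).
Proof.
rewrite addnC -size_basis; apply/perm_size/uniq_perm; rewrite ?deg_mons_uniq ?uniq_basis //.
by move=> m; rewrite mem_deg_mons basis_cover.
Qed.

End DegreeMonomials.

Section PointSums.
Variables (F : finFieldType) (n : nat).
Local Notation point := (PPoint F n).

Definition point_sum (e : 'X_{1..n.+1}) : F :=
  \sum_(x : point) \prod_j (val x : 'I_n.+1 -> F) j ^+ e j.

Definition is_pivot (i : 'I_n.+1) (f : {ffun 'I_n.+1 -> F}) : bool :=
  (f i == 1) && [forall j : 'I_n.+1, (j < i)%N ==> (f j == 0)].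

Lemma pivot_uniq i i' f : is_pivot i f -> is_pivot i' f -> i = i'.
Proof.
wlog le_ii' : i i' / (i <= i')%N.
  move=> gen pivot_i pivot_i'; case: (leqP i i') => [le_ii'|/ltnW le_i'i].
    exact: gen.
  exact/esym/gen.
move=> /andP[/eqP fi1 _] /andP[_ /forallP fj0]; apply/val_inj/eqP.
rewrite eqn_leq le_ii' leqNgt; apply/negP => /(implyP (fj0 i)).
by rewrite fi1 oner_eq0.
Qed.

Lemma natr_proj_rep f : ((is_proj_rep f)%:R : F) = \sum_i (is_pivot i f)%:R.
Proof.
have [/existsP[i0 pivot_i0]|not_rep] := boolP (is_proj_rep f).
  have {}pivot_i0 : is_pivot i0 f := pivot_i0.
  rewrite (bigD1 i0) //= pivot_i0 big1 ?addr0 // => i i_neq_i0.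
  case: (boolP (is_pivot i f)) => // /pivot_uniq/(_ pivot_i0) i_eq_i0.
  by rewrite i_eq_i0 eqxx in i_neq_i0.
rewrite big1 // => i _; case: (boolP (is_pivot i f)) => // pivot_i.
by case/negP: not_rep; apply/existsP; exists i.
Qed.

(* Splitting the points according to the position i of their pivot, the
   coordinates before i are 0, the i-th is 1 and the later ones are free. *)
Lemma point_sum_pivot e : point_sum e = \sum_(i : 'I_n.+1) \prod_(j : 'I_n.+1)
   (if (j < i)%N then (e j == 0%N)%:R else if j == i then 1 else powsum F (e j)).
Proof.
pose mon (f : {ffun 'I_n.+1 -> F}) := \prod_j f j ^+ e j.
pose cond (i j : 'I_n.+1) (t : F) :=
  if (j < i)%N then t == 0 else if j == i then t == 1 else true.
pose term (i j : 'I_n.+1) (t : F) := (cond i j t)%:R * t ^+ e j.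
have sum_reps : point_sum e = \sum_f (is_proj_rep f)%:R * mon f.
  rewrite (bigID (@is_proj_rep F n)) /= [X in _ + X]big1 => [|f /negbTE->]; last by rewrite mul0r.
  rewrite addr0 (reindex_omap (val : point -> _) insub) => [|f rep_f]; last by rewrite insubT.
  by apply: eq_big => [x|x _]; rewrite ?(valP x) ?valK ?eqxx // mul1r.
have pivot_split f :
    (is_proj_rep f)%:R * mon f = \sum_i \prod_j term i j (f j).
  rewrite natr_proj_rep mulr_suml; apply: eq_bigr => i _.
  rewrite big_split /= prodr_nat_bool; congr (_%:R * _); congr (nat_of_bool _).
  apply/andP/forallP => [[/eqP fi1 /forallP fj0] j|cond_i]; rewrite /cond /=.
    case: ltnP => [lt_ji|_]; first exact: (implyP (fj0 j)).
    by case: eqP => // ->; rewrite fi1.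
  split; first by have := cond_i i; rewrite /cond ltnn eqxx.
  by apply/forallP => j; apply/implyP => lt_ji; have := cond_i j; rewrite /cond lt_ji.
rewrite sum_reps (eq_bigr _ (fun f _ => pivot_split f)) exchange_big /=.
apply: eq_bigr => i _; rewrite -bigA_distr_bigA /=; apply: eq_bigr => j _.
rewrite /term /cond; case: ltnP => _; last case: eqP => _.
- by rewrite (bigD1 0) //= eqxx mul1r expr0n big1 ?addr0 // => t /negbTE->; rewrite mul0r.
- by rewrite (bigD1 1) //= eqxx mul1r expr1n big1 ?addr0 // => t /negbTE->; rewrite mul0r.
- by apply: eq_bigr => t _; rewrite mul1r.
Qed.
End PointSums.

Section Evaluation.
Variables (F : finFieldType) (n : nat).
Local Notation ev := (@ev F n).
Local Notation N := (Npts F n).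

Definition evX_mx (s : seq 'X_{1..n.+1}) : 'M[F]_(size s, N) :=
  \matrix_(i < size s) ev 'X_[nth 0%MM s i].

Lemma ev0 : ev 0 = 0.
Proof. by apply/rowP => l; rewrite !mxE meval0. Qed.

Lemma evD p p' : ev (p + p') = ev p + ev p'.
Proof. by apply/rowP => l; rewrite !mxE mevalD. Qed.

Lemma evZ c p : ev (c *: p) = c *: ev p.
Proof. by apply/rowP => l; rewrite !mxE mevalZ. Qed.

Lemma ev_sum (I : Type) (r : seq I) (P : pred I) (f : I -> {mpoly F[n.+1]}) :
  ev (\sum_(i <- r | P i) f i) = \sum_(i <- r | P i) ev (f i).
Proof. exact: (big_morph _ evD ev0). Qed.

Lemma ev_dotX p m' :
  (ev p *m (ev 'X_[m'])^T) 0 0 = \sum_(m <- msupp p) p@_m * point_sum F (m + m').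
Proof.
rewrite mxE (eq_bigr (fun l : 'I_N => \sum_(m <- msupp p)
    p@_m * \prod_j (val (enum_val l) : 'I_n.+1 -> F) j ^+ (m + m')%MM j)).
  rewrite exchange_big /=; apply: eq_bigr => m _; rewrite -mulr_sumr /point_sum /Npts; congr (_ * _).
  by rewrite [RHS](eq_bigl (fun x => x \in predT)) // [RHS](big_enum_val (I := PPoint F n)).
move=> l _; rewrite !mxE mevalE mevalX mulr_suml; apply: eq_bigr => m _.
rewrite -mulrA -big_split /=; congr (_ * _); apply: eq_bigr => j _.
by rewrite mnmDE exprD.
Qed.

Lemma evX_dotX m m' : (ev 'X_[m] *m (ev 'X_[m'])^T) 0 0 = point_sum F (m + m').
Proof. by rewrite ev_dotX msuppX big_seq1 mcoeffX eqxx mul1r. Qed.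

Lemma evX_rows_mul_tr r r' (u : 'I_r -> 'X_{1..n.+1}) (u' : 'I_r' -> 'X_{1..n.+1}) i j :
  ((\matrix_i ev 'X_[u i]) *m (\matrix_j ev 'X_[u' j])^T) i j = point_sum F (u i + u' j).
Proof. by rewrite -evX_dotX !mxE; apply: eq_bigr => l _; rewrite !mxE. Qed.

Lemma evX_sub_mx s m : m \in s -> (ev 'X_[m] <= evX_mx s)%MS.
Proof.
move=> m_in_s; have lt_ms : (index m s < size s)%N by rewrite index_mem.
by rewrite -(nth_index 0%MM m_in_s) -(rowK (fun i => ev 'X_[nth 0%MM s i]) (Ordinal lt_ms)) row_sub.
Qed.
End Evaluation.

Section Independence.
Variables (F : finFieldType) (n k : nat).
Hypothesis k_lt : (k < #|F|.-1)%N.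

(* The exponent 1 of x_0 kills every pivot position other than 0. *)
Definition dual_mon (m : 'X_{1..n.+1}) : 'X_{1..n.+1} :=
  [multinom if (i : nat) == 0%N then 1%N else (#|F|.-1 - m i)%N | i < n.+1].

Lemma point_sum_dual m m' : mdeg m = k -> mdeg m' = k ->
  point_sum F (m + dual_mon m') = (m == m')%:R * (-1) ^+ n.
Proof.
move=> deg_m deg_m'.
rewrite point_sum_pivot (bigD1 ord0) //= [X in _ + X]big1 ?addr0; last first.
  move=> i i_neq0; rewrite (bigD1 ord0) //= lt0n -[_ != _]/(i != ord0) i_neq0.
  by rewrite mnmDE mnmE addn1 mul0r.
rewrite (bigD1 ord0) //= mul1r (eq_bigr (fun j => - (m j == m' j)%:R)); last first.
  move=> j j_neq0; have j_gt0 : (j != 0%N :> nat) by [].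
  rewrite (negbTE j_neq0) mnmDE mnmE (negbTE j_gt0).
  have := mnm_le_mdeg m j; have := mnm_le_mdeg m' j.
  rewrite deg_m deg_m' => le_m'j le_mj; rewrite powsum_small; last by lia.
  by congr (- _%:R); apply/eqP/eqP; lia.
have [<-|m_neq_m'] := eqVneq m m'.
  rewrite (eq_bigr (fun=> -1)) => [|j _]; last by rewrite eqxx.
  by rewrite mul1r prodr_const cardC1 card_ord.
have [j j_neq0 mj_neq] : exists2 j, j != ord0 & m j != m' j.
  apply/exists_inP; apply: contra_neqT m_neq_m' => /exists_inPn same.
  have same_nz j : j != ord0 -> m j = m' j by move=> /same /negPn /eqP.
  apply/mnmP => j; have [->|/same_nz //] := eqVneq j ord0.
  move: deg_m'; rewrite -deg_m !mdegE (bigD1 ord0) //= [in RHS](bigD1 ord0) //=.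
  by rewrite (eq_bigr _ (fun i => same_nz i)) => /eqP; rewrite eqn_add2r => /eqP ->.
by rewrite (bigD1 j) //= (negbTE mj_neq) oppr0 !mul0r.
Qed.

Lemma row_free_evX_mx (s : seq 'X_{1..n.+1}) :
  uniq s -> all (fun m => mdeg m == k) s -> row_free (evX_mx F s).
Proof.
move=> s_uniq /allP deg_s.
pose D := \matrix_(j < size s) @ev F n 'X_[dual_mon (nth 0%MM s j)].
have evX_D : evX_mx F s *m D^T = (-1) ^+ n *: 1%:M.
  apply/matrixP => i j; rewrite evX_rows_mul_tr.
  rewrite point_sum_dual ?(eqP (deg_s _ (mem_nth _ _))) //.
  by rewrite !mxE nth_uniq // mulrC.
apply/eqP/anti_leq; rewrite rank_leq_row /=.
have := mxrankM_maxl (evX_mx F s) D^T.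
by rewrite evX_D mxrank_scale_nz ?mxrank1 // signr_eq0.
Qed.
End Independence.

Section PRMCode.
Variables (F : finFieldType) (n k : nat).
Local Notation mons := (deg_mons n k).

Lemma sub_evX_deg_monsP (v : 'rV[F]_(Npts F n)) :
  (v <= evX_mx F mons)%MS <-> exists p : {mpoly F[n.+1]}, p \is k.-homog /\ v = ev p.
Proof.
split=> [/submxP[c ->]|[p [p_homog ->]]].
  exists (\sum_i c 0 i *: 'X_[nth 0%MM mons i]); split.
    apply: rpred_sum => i _; apply: rpredZ; rewrite dhomogX -mem_deg_mons.
    exact: mem_nth.
  by rewrite mulmx_sum_row ev_sum; apply: eq_bigr => i _; rewrite evZ rowK.
rewrite (mpolyE p) ev_sum big_seq; apply: summx_sub => m m_supp.
rewrite evZ scalemx_sub // evX_sub_mx // mem_deg_mons.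
exact/eqP/(dhomogP _ _ _ p_homog).
Qed.

Lemma PRM_code_eqmx C : @is_PRM_code F n k C -> (C == evX_mx F mons)%MS.
Proof. by move=> C_PRM; apply: eqmx_rowP => v; rewrite C_PRM sub_evX_deg_monsP. Qed.

Lemma rank_PRM_code C : (k < #|F|.-1)%N -> @is_PRM_code F n k C -> \rank C = 'C(n + k, k).
Proof.
move=> k_lt /PRM_code_eqmx/eqmxP->; rewrite -size_deg_mons.
apply/eqP/(row_free_evX_mx k_lt (deg_mons_uniq n k))/allP => m.
by rewrite mem_deg_mons.
Qed.
End PRMCode.

Section TailMonomials.
Variables (n k : nat).
Hypothesis n_gt0 : (0 < n)%N.
Local Notation xn := (@ord_max n).
Local Notation xn1 := (inord n.-1 : 'I_n.+1).

Lemma inord_predE : (xn1 : nat) = n.-1.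
Proof. by rewrite inordK //; lia. Qed.

Lemma inord_pred_neq_max : xn1 != xn.
Proof. by rewrite -val_eqE /= inord_predE; lia. Qed.

Definition zero_below (t : nat) (m : 'X_{1..n.+1}) :=
  [forall j : 'I_n.+1, (j < t)%N ==> (m j == 0%N)].

Lemma zero_belowD t m m' : zero_below t (m + m') = zero_below t m && zero_below t m'.
Proof.
apply/forallP/andP => [zero_mm'|[/forallP zero_m /forallP zero_m'] j].
  by split; apply/forallP => j; apply/implyP => /(implyP (zero_mm' j));
    rewrite mnmDE addn_eq0 => /andP[].
by apply/implyP => lt_jt; rewrite mnmDE (eqP (implyP (zero_m j) lt_jt)) (implyP (zero_m' j)).
Qed.

Definition tail_mon (a : nat) : 'X_{1..n.+1} :=
  [multinom (if (i : nat) == n.-1 then (k - a)%N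
             else if (i : nat) == n then a else 0%N) | i < n.+1].

Lemma tail_mon_max a : tail_mon a xn = a.
Proof. by rewrite mnmE /= eqxx; case: eqP => //; lia. Qed.

Lemma tail_mon_pred a : tail_mon a xn1 = (k - a)%N.
Proof. by rewrite mnmE inord_predE eqxx. Qed.

Lemma tail_mon_low a (j : 'I_n.+1) : (j < n.-1)%N -> tail_mon a j = 0%N.
Proof. by rewrite mnmE => lt_j; rewrite !ifN_eq //; lia. Qed.

Lemma tail_mon_inj : injective tail_mon.
Proof. by move=> a b eq_ab; rewrite -(tail_mon_max a) eq_ab tail_mon_max. Qed.

Lemma zero_below_tail_mon a : zero_below n.-1 (tail_mon a).
Proof. by apply/forallP => j; apply/implyP => /tail_mon_low ->. Qed.

Lemma mdeg_last2 (m : 'X_{1..n.+1}) :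
  mdeg m = (m xn + m xn1 + \sum_(j : 'I_n.+1 | (j < n.-1)%N) m j)%N.
Proof.
rewrite mdegE (bigD1 xn) //= (bigD1 xn1) /= ?inord_pred_neq_max // addnA.
congr (_ + _)%N; apply: eq_bigl => j; rewrite -!val_eqE /= inord_predE.
by have := ltn_ord j; lia.
Qed.

Lemma mdeg_tail_mon a : (a <= k)%N -> mdeg (tail_mon a) = k.
Proof.
move=> le_ak; rewrite mdeg_last2 tail_mon_max tail_mon_pred big1 => [|j /tail_mon_low //].
lia.
Qed.

Lemma tail_monE (m : 'X_{1..n.+1}) : mdeg m = k -> zero_below n.-1 m -> m = tail_mon (m xn).
Proof.
move=> deg_m /forallP m_low.
have low0 (j : 'I_n.+1) : (j < n.-1)%N -> m j = 0%N by move=> /(implyP (m_low j)) /eqP.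
have deg_k : k = (m xn + m xn1)%N by rewrite -deg_m mdeg_last2 big1 ?addn0.
apply/mnmP => j; rewrite mnmE; case: (ltnP j n.-1) => [lt_j|ge_j].
  by rewrite low0 // !ifN_eq //; lia.
case: eqP => [j_pred|j_npred].
  have -> : j = xn1 by apply: val_inj; rewrite /= inord_predE.
  lia.
have -> : j = xn by apply: val_inj => /=; have := ltn_ord j; lia.
by rewrite /= eqxx.
Qed.

Lemma zero_below_n_tail_mon m : mdeg m = k -> zero_below n m = (m == tail_mon k).
Proof.
move=> deg_m; apply/idP/eqP => [zero_m|->].
  have zero2_m : zero_below n.-1 m.
    by apply/forallP => j; apply/implyP => lt_j; apply: (implyP (forallP zero_m j)); lia.
  have m_pred0 : m xn1 = 0%N by apply/eqP/(implyP (forallP zero_m xn1)); rewrite inord_predE; lia.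
  have le_mk : (m xn <= k)%N by rewrite -deg_m mnm_le_mdeg.
  move: m_pred0; rewrite (tail_monE deg_m zero2_m) tail_mon_pred => k_le.
  by congr tail_mon; lia.
apply/forallP => j; apply/implyP => lt_jn; case: (ltnP j n.-1) => [/tail_mon_low -> //|ge_j].
have -> : j = xn1 by apply: val_inj; rewrite /= inord_predE; lia.
by rewrite tail_mon_pred subnn.
Qed.

Section LowDegreeSums.
Variable F : finFieldType.
Local Notation q1 := #|F|.-1.

(* For a small total degree at most the pivots n - 1 and n contribute. *)
Lemma point_sum_small_deg (e : 'X_{1..n.+1}) : (mdeg e < q1.*2)%N ->
  point_sum F e = (zero_below n e)%:R - ((e xn == q1) && zero_below n.-1 e)%:R.
Proof.
move=> deg_e; have e_lt j : (e j < q1.*2)%N := leq_ltn_trans (mnm_le_mdeg e j) deg_e.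
rewrite point_sum_pivot (bigD1 xn) //= [X in _ + X](bigD1 xn1) ?inord_pred_neq_max //=.
rewrite [X in _ + (_ + X)]big1.
  rewrite addr0; congr (_ + _).
    rewrite (eq_bigr (fun j : 'I_n.+1 => ((j < n)%N ==> (e j == 0%N))%:R)) ?prodr_nat_bool // => j _.
    case: ltnP => //= le_nj; suff -> : j = xn by rewrite eqxx.
    by apply: val_inj => /=; have := ltn_ord j; lia.
  rewrite (bigD1 xn) //=.
  have -> : (xn < xn1)%N = false by rewrite inord_predE /=; lia.
  have -> : (xn == xn1) = false by rewrite eq_sym (negbTE inord_pred_neq_max).
  rewrite (eq_bigr (fun j : 'I_n.+1 => ((j < n.-1)%N ==> (e j == 0%N))%:R)) => [|j j_neq]; last first.
    rewrite inord_predE; case: ltnP => //= le_j; rewrite ifT // -val_eqE /= inord_predE.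
    by move: j_neq; rewrite -val_eqE /=; have := ltn_ord j; lia.
  rewrite prodr_nat_bool powsum_small // mulNr -natrM mulnb; congr (- _%:R); congr (_ && _).
  apply: eq_forallb => j; have [->|] //= := eqVneq j xn.
  by rewrite ltnNge leq_pred.
move=> i /andP[i_neq_n i_neq_n1].
have lt_i : (i < n.-1)%N.
  by move: i_neq_n i_neq_n1; rewrite -!val_eqE /= inord_predE; have := ltn_ord i; lia.
have [j lt_ij ej_neq] : exists2 j : 'I_n.+1, (i < j)%N & e j != q1.
  have [exn|] := eqVneq (e xn) q1; last by exists xn => //=; lia.
  exists xn1; first by rewrite inord_predE; lia.
  by apply/eqP => exn1; move: deg_e; rewrite mdeg_last2 exn exn1; lia.
rewrite (bigD1 j) //= ltnNge (ltnW lt_ij) ifN_eq; last by rewrite -val_eqE /=; lia.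
by rewrite powsum_small // (negbTE ej_neq) oppr0 mul0r.
Qed.

Section DegreeK.
Hypothesis k_lt : (k < q1)%N.

Lemma point_sum_deg_pair m m' : mdeg m = k -> mdeg m' = k ->
  point_sum F (m + m') = ((m == tail_mon k) && (m' == tail_mon k))%:R
    - [&& zero_below n.-1 m, zero_below n.-1 m' & m xn + m' xn == q1]%:R.
Proof.
move=> deg_m deg_m'; rewrite point_sum_small_deg ?mdegD ?deg_m ?deg_m'; last by lia.
rewrite !zero_belowD !zero_below_n_tail_mon // mnmDE.
by congr (_ - _%:R); rewrite andbC -andbA.
Qed.

Lemma excluded_monP m :
  reflect (exists2 a, (q1 - k <= a <= k)%N & m = tail_mon a) (excluded_mon F k m).
Proof.
apply: (iffP existsP) => [[a /andP[le_a /eqP->]]|[a /andP[le_a le_ak] ->]].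
  by exists a => //; rewrite le_a -ltnS ltn_ord.
by exists (Ordinal (le_ak : (a < k.+1)%N)); rewrite /= le_a eqxx.
Qed.

Lemma point_sum_not_excluded (m m' : 'X_{1..n.+1}) :
  (q1 < 2 * k)%N -> mdeg m = k -> mdeg m' = k ->
  ~~ excluded_mon F k m -> point_sum F (m + m') = 0.
Proof.
move=> lt_q1_2k deg_m deg_m' not_excl.
have tail_small : zero_below n.-1 m -> (m xn < q1 - k)%N.
  move=> zero_m; rewrite ltnNge; apply: contra not_excl => le_m.
  apply/excluded_monP; exists (m xn); last exact: tail_monE.
  by rewrite le_m -deg_m mnm_le_mdeg.
rewrite point_sum_deg_pair //.
have -> : (m == tail_mon k) = false.
  apply/negP => /eqP m_tail; have := tail_small.
  by rewrite m_tail zero_below_tail_mon tail_mon_max => /(_ isT); lia.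
have -> // : [&& zero_below n.-1 m, zero_below n.-1 m' & m xn + m' xn == q1] = false.
  apply/negP => /and3P[/tail_small lt_m _ /eqP sum_q1].
  by have := mnm_le_mdeg m' xn; lia.
by rewrite subrr.
Qed.

Lemma point_sum_tail_mon (m : 'X_{1..n.+1}) b : mdeg m = k -> (q1 - k <= b <= k)%N ->
  point_sum F (m + tail_mon b)
  = ((b == k) && (m == tail_mon k))%:R - (m == tail_mon (q1 - b))%:R.
Proof.
move=> deg_m /andP[le_b le_bk].
rewrite point_sum_deg_pair ?mdeg_tail_mon // (inj_eq tail_mon_inj) andbC.
rewrite zero_below_tail_mon tail_mon_max; congr (_ - (nat_of_bool _)%:R).
apply/and3P/eqP => [[zero_m _ /eqP sum_q1]|->].
  by rewrite (tail_monE deg_m zero_m); congr tail_mon; lia.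
by rewrite zero_below_tail_mon tail_mon_max; split => //; apply/eqP; lia.
Qed.
End DegreeK.
End LowDegreeSums.
End TailMonomials.

Section Hull.
Variables (F : finFieldType) (n k : nat).
Hypotheses (n_gt0 : (0 < n)%N) (lt_q1_2k : (#|F|.-1 < 2 * k)%N) (k_lt : (k < #|F|.-1)%N).
Local Notation q1 := #|F|.-1.
Local Notation tail_mon := (@tail_mon n k).
Local Notation ev := (@ev F n).

Lemma mem_calM m : (m \in calM F n k) = (mdeg m == k) && ~~ excluded_mon F k m.
Proof. by rewrite mem_filter mem_deg_mons andbC. Qed.

Lemma row_free_calM_mx : row_free (calM_mx F n k).
Proof.
apply: (row_free_evX_mx k_lt); first exact: filter_uniq (deg_mons_uniq n k).
by apply/allP => m; rewrite mem_calM => /andP[].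
Qed.

Lemma size_calM : (size (calM F n k) + (2 * k + 1 - q1) = size (deg_mons n k))%N.
Proof.
rewrite -(count_predC (excluded_mon F k) (deg_mons n k)) addnC size_filter.
congr (_ + _)%N; rewrite -size_filter -(size_iota (q1 - k) (2 * k + 1 - q1)).
rewrite -(size_map tail_mon); apply/perm_size/uniq_perm.
- by rewrite (map_inj_uniq (@tail_mon_inj _ _ n_gt0)) iota_uniq.
- exact: filter_uniq (deg_mons_uniq n k).
move=> m; rewrite mem_filter; apply/mapP/andP => [[a]|[/excluded_monP[a a_range ->] _]].
  rewrite mem_iota => a_range ->; have le_ak : (a <= k)%N by lia.
  split; first by apply/excluded_monP; exists a => //; lia.
  by rewrite mem_deg_mons mdeg_tail_mon.
by exists a => //; rewrite mem_iota; lia.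
Qed.

Lemma calM_mx_sub_hull C : is_PRM_code k C -> (calM_mx F n k <= hull C)%MS.
Proof.
move=> /PRM_code_eqmx/andP[C_sub sub_C].
have calM_sub : (calM_mx F n k <= evX_mx F (deg_mons n k))%MS.
  apply/row_subP => i; rewrite rowK evX_sub_mx //.
  by have := mem_nth 0%MM (ltn_ord i); rewrite mem_calM mem_deg_mons => /andP[].
rewrite sub_capmx (submx_trans calM_sub sub_C); apply/sub_kermxP.
apply: mulmx_tr_sub0 C_sub; apply/matrixP => i j; rewrite evX_rows_mul_tr mxE.
have := mem_nth 0%MM (ltn_ord i); rewrite mem_calM => /andP[/eqP deg_i not_excl].
have := mem_nth 0%MM (ltn_ord j); rewrite mem_deg_mons => /eqP deg_j.
exact: (point_sum_not_excluded n_gt0 k_lt lt_q1_2k deg_i deg_j not_excl).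
Qed.

Lemma ev_dot_tail_mon p b : p \is k.-homog -> (q1 - k <= b <= k)%N ->
  (ev p *m (ev 'X_[tail_mon b])^T) 0 0
  = (b == k)%:R * p@_(tail_mon k) - p@_(tail_mon (q1 - b)).
Proof.
move=> p_homog b_range; rewrite ev_dotX big_seq.
rewrite (eq_bigr (fun m => (b == k)%:R * (p@_m * (m == tail_mon k)%:R)
                          - p@_m * (m == tail_mon (q1 - b))%:R)) => [|m m_supp].
  by rewrite -big_seq sumrB -mulr_sumr !sum_msupp_coef.
rewrite point_sum_tail_mon ?(dhomogP _ _ _ p_homog) // mulrBr.
by case: (b == k); rewrite /= ?mul1r ?mul0r ?mulr0.
Qed.

(* [c a] stands for the coefficient of x_(n-1)^(k-a) x_n^a. *)
Lemma tail_coef_eq0 (c : nat -> F) :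
  (forall b, (q1 - k <= b <= k)%N -> (b == k)%:R * c k - c (q1 - b)%N = 0) ->
  forall a, (q1 - k <= a <= k)%N -> c a = 0.
Proof.
move=> eqs.
have c_gt a : (q1 - k < a <= k)%N -> c a = 0.
  move=> a_range; have := eqs (q1 - a)%N ltac:(lia).
  have -> : (q1 - (q1 - a) = a)%N by lia.
  have -> : (q1 - a == k)%N = false by lia.
  by rewrite mul0r sub0r => /eqP; rewrite oppr_eq0 => /eqP.
move=> a a_range; have [|le_a] := ltnP (q1 - k) a; first by move=> lt_a; apply: c_gt; lia.
have -> : a = (q1 - k)%N by lia.
have := eqs k ltac:(lia); rewrite eqxx mul1r c_gt; last by lia.
by rewrite sub0r => /eqP; rewrite oppr_eq0 => /eqP.
Qed.

Lemma ev_sub_calM_mx p : p \is k.-homog ->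
  (forall a, (q1 - k <= a <= k)%N -> p@_(tail_mon a) = 0) ->
  (ev p <= calM_mx F n k)%MS.
Proof.
move=> p_homog tail_coef0; rewrite (mpolyE p) ev_sum big_seq.
apply: summx_sub => m m_supp; rewrite evZ.
have [/excluded_monP[a a_range ->]|not_excl] := boolP (excluded_mon F k m).
  by rewrite tail_coef0 // scale0r sub0mx.
rewrite scalemx_sub //; apply: (@evX_sub_mx F n (calM F n k)).
by rewrite mem_calM not_excl andbT (dhomogP _ _ _ p_homog).
Qed.

Lemma hull_sub_calM_mx C : is_PRM_code k C -> (hull C <= calM_mx F n k)%MS.
Proof.
move=> C_PRM; apply/row_subP => i; set v := row i (hull C).
have /(C_PRM v).1[p [p_homog v_ev]] : (v <= C)%MS.
  exact: submx_trans (row_sub i _) (capmxSl _ _).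
have v_orth : v *m C^T = 0.
  by apply/sub_kermxP; apply: submx_trans (row_sub i _) (capmxSr _ _).
rewrite v_ev in v_orth *; apply: (ev_sub_calM_mx p_homog).
apply: tail_coef_eq0 => b b_range; rewrite -(ev_dot_tail_mon p_homog b_range).
rewrite (mulmx_tr_sub0 v_orth) ?mxE //; apply/(C_PRM _).2.
exists 'X_[tail_mon b]; split=> //; rewrite dhomogX; apply/eqP/mdeg_tail_mon => //; lia.
Qed.
End Hull.

Theorem mainTheorem10 (F : finFieldType) (n k : nat) :
  (1 <= n)%N -> (#|F|.-1 < 2 * k)%N -> (k < #|F|.-1)%N ->
  (exists C : 'M[F]_(Npts F n), is_PRM_code k C) /\
  (forall C : 'M[F]_(Npts F n), is_PRM_code k C ->
     [/\ (\rank (hull C) + (2 * k + 1 - #|F|.-1) = \rank C)%N,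
         \rank C = 'C(n + k, k),
         row_free (calM_mx F n k)
       & (calM_mx F n k == hull C)%MS]).
Proof.
move=> n_gt0 lt_q1_2k k_lt; split.
  by exists <<evX_mx F (deg_mons n k)>>%MS => v; rewrite genmxE sub_evX_deg_monsP.
move=> C C_PRM; have rank_C := rank_PRM_code k_lt C_PRM.
have calM_hull : (calM_mx F n k == hull C)%MS.
  by rewrite /eqmx (calM_mx_sub_hull n_gt0 lt_q1_2k k_lt C_PRM)
             (hull_sub_calM_mx n_gt0 lt_q1_2k k_lt C_PRM).
have free_calM := row_free_calM_mx n k_lt.
split=> //; rewrite -(eqmx_rank calM_hull) (eqP free_calM) rank_C -size_deg_mons.
exact: size_calM.
Qed.
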